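(* Let $n=2m-1$ be odd, fix $\boldsymbol{\rho}^0\in\mathcal{P}_n$ and $\alpha\in(0,\infty)$, and let $\mathbf{R}\sim\mathrm{Mallows}(\boldsymbol{\rho}^0,\alpha)$ with the footrule distance. For $i=1,\dots,n$ let $o^0_i$ be the item with $\rho^0_{o^0_i}=i$. Then the rank $R_{o^0_m}$ of the middle-ranked item is symmetrically distributed about $m$, i.e., for all $k=1,\dots,m-1$, $$P(R_{o^0_m}=m-k\mid\boldsymbol{\rho}^0,\alpha)=P(R_{o^0_m}=m+k\mid\boldsymbol{\rho}^0,\alpha).$$
   Context: $\mathcal{P}_n$ denotes the set of permutations of $\{1,\dots,n\}$; a ranking $\mathbf{r}\in\mathcal{P}_n$ assigns rank $r_i$ to item $i$. The footrule distance is $d(\mathbf{r},\boldsymbol{\rho})=\sum_{i=1}^n|r_i-\rho_i|$. The Mallows distribution $\mathrm{Mallows}(\boldsymbol{\rho}^0,\alpha)$ on $\mathcal{P}_n$ has probability mass function $P(\mathbf{R}=\mathbf{r}\mid\boldsymbol{\rho}^0,\alpha)=\frac{1}{Z_n(\alpha)}\exp\{-\frac{\alpha}{n}d(\mathbf{r},\boldsymbol{\rho}^0)\}$ with normalizing constant $Z_n(\alpha)$. *)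

From mathcomp Require Import all_boot all_order all_algebra all_fingroup.
From mathcomp Require Import all_classical all_reals all_analysis.
Set Implicit Arguments. Unset Strict Implicit. Unset Printing Implicit Defensive.
Import Order.TTheory GRing.Theory Num.Theory.
Local Open Scope ring_scope.

(* A ranking r of P_n is a permutation s : {perm 'I_n}; item i (0-based index)
   receives rank r_i = (s i) + 1 in {1..n}. *)
Definition rank n (s : {perm 'I_n}) (i : 'I_n) : nat := (s i).+1.

Definition footrule n (r rho : {perm 'I_n}) : nat :=
  (\sum_(i < n) `|(rank r i)%:Z - (rank rho i)%:Z|%N)%N.

Definition mallowsZ (R : realType) n (rho0 : {perm 'I_n}) (alpha : R) : R :=
  \sum_(r : {perm 'I_n}) expR (- (alpha / n%:R) * (footrule r rho0)%:R).

Definition mallows_pmf (R : realType) n (rho0 : {perm 'I_n}) (alpha : R)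
  (r : {perm 'I_n}) : R :=
  expR (- (alpha / n%:R) * (footrule r rho0)%:R) / mallowsZ rho0 alpha.

Definition mallows_prob (R : realType) n (rho0 : {perm 'I_n}) (alpha : R)
  (A : pred {perm 'I_n}) : R :=
  \sum_(r : {perm 'I_n} | A r) mallows_pmf rho0 alpha r.

(* o^0_j : the item whose rank under rho0 is j (j in 1..n), i.e. rho0^{-1}(j-1) *)
Definition item_of_rank n (rho0 : {perm 'I_n}) (j : 'I_n) : 'I_n := (rho0^-1)%g j.

From mathcomp Require Import all_boot all_order all_algebra all_fingroup.
From mathcomp Require Import all_classical all_reals all_analysis.
From mathcomp Require Import zify.
Import Order.TTheory GRing.Theory Num.Theory.
Local Open Scope ring_scope.

(* Reversing all ranks and, simultaneously, swapping the items of ranks j and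
   n+1-j under rho0 is an involution on rankings that preserves the footrule
   distance to rho0, hence the Mallows weights.  The item of middle rank is
   fixed by the swap, so its rank j is sent to n+1-j.  No sign condition on
   alpha is needed. *)

Section RankReflection.

Variable n : nat.
Implicit Types (s r : {perm 'I_n}) (i : 'I_n).

Definition rev_perm : {perm 'I_n} := perm (@rev_ord_inj n).

Lemma rev_permE i : rev_perm i = rev_ord i.
Proof. by rewrite permE. Qed.

Definition opposite_item s : {perm 'I_n} := (s * rev_perm * s^-1)%g.

Lemma opposite_itemE s i :
  opposite_item s i = (s^-1)%g (rev_ord (s i)).
Proof. by rewrite /opposite_item !permM rev_permE. Qed.

Lemma opposite_itemK s : involutive (opposite_item s).
Proof. by move=> i; rewrite !opposite_itemE permKV rev_ordK permK. Qed.

Lemma opposite_item_middle s i :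
  (rank s i).*2 = n.+1 -> opposite_item s i = i.
Proof.
rewrite /rank opposite_itemE => mid_i.
apply: (canLR (permK s)); apply: val_inj => /=; lia.
Qed.

Definition reflect_ranking s r : {perm 'I_n} :=
  (opposite_item s * r * rev_perm)%g.

Lemma reflect_rankingE s r i :
  reflect_ranking s r i = rev_ord (r (opposite_item s i)).
Proof. by rewrite /reflect_ranking !permM rev_permE. Qed.

Lemma reflect_rankingK s : involutive (reflect_ranking s).
Proof.
move=> r; apply/permP => i; rewrite !reflect_rankingE opposite_itemK.
by rewrite rev_ordK.
Qed.

Lemma rank_reflect_ranking s r i :
  rank (reflect_ranking s r) i = (n.+1 - rank r (opposite_item s i))%N.
Proof.
by rewrite /rank reflect_rankingE /=; have := ltn_ord (r (opposite_item s i)); lia.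
Qed.

Lemma footrule_reflect_ranking s r :
  footrule (reflect_ranking s r) s = footrule r s.
Proof.
rewrite /footrule (reindex_inj (can_inj (opposite_itemK s))) /=.
apply: eq_bigr => i _; rewrite rank_reflect_ranking opposite_itemK.
rewrite /rank opposite_itemE permKV /=.
by have := ltn_ord (r i); have := ltn_ord (s i); lia.
Qed.

Variables (R : realType) (rho : {perm 'I_n}) (alpha : R).

Lemma mallows_pmf_reflect_ranking r :
  mallows_pmf rho alpha (reflect_ranking rho r) = mallows_pmf rho alpha r.
Proof. by rewrite /mallows_pmf footrule_reflect_ranking. Qed.

Lemma mallows_prob_reflect_ranking (A : pred {perm 'I_n}) :
  mallows_prob rho alpha A =
  mallows_prob rho alpha (fun r => A (reflect_ranking rho r)).
Proof.
rewrite /mallows_prob (reindex_inj (can_inj (reflect_rankingK rho))) /=.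
by apply: eq_bigr => r _; rewrite mallows_pmf_reflect_ranking.
Qed.

Lemma mallows_rank_middle_sym (o : 'I_n) (j : nat) :
  (rank rho o).*2 = n.+1 ->
  mallows_prob rho alpha (fun r => rank r o == j) =
  mallows_prob rho alpha (fun r => rank r o == (n.+1 - j)%N).
Proof.
move=> mid_o; rewrite [RHS]mallows_prob_reflect_ranking.
apply: eq_bigl => r; rewrite rank_reflect_ranking opposite_item_middle //.
rewrite /rank; have := ltn_ord (r o); move: (nat_of_ord (r o)) => x x_lt_n.
by apply/eqP/eqP; lia.
Qed.

End RankReflection.

Theorem mainTheorem3 (R : realType) (m : nat) (hm : (0 < m)%N)
  (rho0 : {perm 'I_(2 * m - 1)}) (alpha : R) (halpha : 0 < alpha)
  (mid : 'I_(2 * m - 1)) (hmid : rank rho0 (item_of_rank rho0 mid) = m) :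
  forall k : nat, (1 <= k <= m - 1)%N ->
    mallows_prob rho0 alpha
      (fun r => rank r (item_of_rank rho0 mid) == (m - k)%N) =
    mallows_prob rho0 alpha
      (fun r => rank r (item_of_rank rho0 mid) == (m + k)%N).
Proof.
move=> k k_bounds.
rewrite mallows_rank_middle_sym; last by rewrite hmid; lia.
by congr mallows_prob; apply/funext => r; congr (_ == _); lia.
Qed.
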